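(* Let ${\tt G}$ be a digraph with a fixed total order on its vertices, $R$ a commutative unital ring, $A$ a unital associative $R$-algebra and $M$ an $(A,A)$-bimodule. The graded $R$-module $C^n_\mu({\tt G};A,M)=\bigoplus_{{\tt H}\in P({\tt G}),\ \#E({\tt H})=n}\mathcal F_{A,M}({\tt H})$ with the map $d=\sum_{{\tt H}\prec{\tt H}'}(-1)^{\sigma_{\rm e}({\tt H},{\tt H}')}\mathcal F_{A,M}({\tt H}\prec{\tt H}')$ is a cochain complex.
   Context: A digraph ${\tt G}=(V,E)$ has finite $V$ and $E\subseteq(V\times V)\setminus\{(v,v)\}$; $s(e),t(e)$ are source and target of $e$. A multipath is a spanning subgraph (all vertices, subset of edges) each of whose components (of the underlying undirected graph) is an isolated vertex or a simple directed path (edges $e_1,\dots,e_k$ with $t(e_i)=s(e_{i+1})$, no repeated vertex, not a cycle). $P({\tt G})$ is the set of multipaths ordered by inclusion of edge sets; ${\tt H}\prec{\tt H}\cup e$ denotes adding one edge. For a multipath ${\tt H}$ with components $c_0<\dots<c_k$ ordered by minimal vertex, let $s(e,{\tt H}),t(e,{\tt H})$ be the indices of the components containing $s(e),t(e)$. $\mathcal F_{A,M}({\tt H})=M\otimes_R A^{\otimes_R k}$ (factor $M$ for $c_0$, one $A$ for each other component); for ${\tt H}\prec{\tt H}\cup e$ with $s=s(e,{\tt H})$, $t=t(e,{\tt H})$, the merged component sits at position $\min(s,t)$ and $\mathcal F_{A,M}({\tt H}\prec{\tt H}\cup e)$ replaces the factors $a_s,a_t$ by $a_s\cdot a_t$ at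 that position, other factors unchanged. $\sigma_{\rm e}({\tt H},{\tt H}\cup e)=t+1$ if $t>s$, and $=s$ if $s>t$, mod 2. *)

From HB Require Import structures.
From mathcomp Require Import all_boot all_order all_algebra.
From Stdlib Require Import ClassicalEpsilon.
Set Implicit Arguments. Unset Strict Implicit. Unset Printing Implicit Defensive.
Import GRing.Theory.
Local Open Scope ring_scope.

(* Vertices are 'I_N, totally ordered by the natural order of ordinals.
   Edges are ordered pairs (source, target). *)
Section Graph.
Variable N : nat.
Local Notation V := 'I_N.
Local Notation edge := (V * V)%type.

Definition is_digraph (E : {set edge}) : Prop := forall e, e \in E -> e.1 != e.2.

Definition drel (H : {set edge}) : rel V := fun u v => (u, v) \in H.
Definition urel (H : {set edge}) : rel V := fun u v => ((u, v) \in H) || ((v, u) \in H).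

(* H is a multipath of G = (V,E): a spanning subgraph (H \subset E) whose
   components are isolated vertices or simple directed paths, i.e.
   in/out-degrees at most 1 and no directed cycle. *)
Definition multipath (E H : {set edge}) : bool :=
  [&& H \subset E,
      [forall v : V, #|[set u : V | (v, u) \in H]| <= 1]%N,
      [forall v : V, #|[set u : V | (u, v) \in H]| <= 1]%N &
      [forall u : V, forall v : V, ((u, v) \in H) ==> ~~ connect (drel H) v u]].

Definition comp_min (H : {set edge}) (w : V) : bool :=
  [forall u : V, connect (urel H) w u ==> (w <= u)%N].

Definition ncomp (H : {set edge}) : nat := #|[set w : V | comp_min H w]|.
Definition kdeg (H : {set edge}) : nat := (ncomp H).-1.

(* index (0-based, components ordered by minimal vertex) of the component
   containing v *)
Definition cidx (H : {set edge}) (v : V) : nat :=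
  #|[set w : V | comp_min H w & [forall u : V, connect (urel H) v u ==> (w < u)%N]]|.
End Graph.

Section Algebra.
Variables (R : comPzRingType) (A : algType R) (M : lmodType R).

Record bimodule := Bimodule {
  lact : A -> M -> M;
  ract : M -> A -> M;
  lact1 : forall m, lact 1 m = m;
  lactM : forall a b m, lact (a * b) m = lact a (lact b m);
  ract1 : forall m, ract m 1 = m;
  ractM : forall a b m, ract m (a * b) = ract (ract m a) b;
  lract : forall a b m, lact a (ract m b) = ract (lact a m) b;
  lact_linl : forall m, linear (fun a : A => lact a m);
  lact_linr : forall a, linear (lact a);
  ract_linl : forall m, linear (ract m);
  ract_linr : forall a, linear (fun m : M => ract m a)
}.

Definition multilinear (k : nat) (W : lmodType R) (f : M -> ('I_k -> A) -> W) : Prop :=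
  (forall a, linear (fun m : M => f m a)) /\
  (forall m a (i : 'I_k), linear (fun x : A => f m (fun j => if j == i then x else a j))).

(* A choice of tensor products  T k = M (x)_R A^{(x)_R k}, k >= 0, given by
   their universal property w.r.t. R-multilinear maps. *)
Unset Implicit Arguments.
Record tensor_power := TensorPower {
  tp_T : nat -> lmodType R;
  tp_i : forall k, M -> ('I_k -> A) -> tp_T k;
  tp_multi : forall k, multilinear (tp_i k);
  tp_univ : forall k (W : lmodType R) (f : M -> ('I_k -> A) -> W),
      multilinear f ->
      exists! g : tp_T k -> W, linear g /\ (forall m a, g (tp_i k m a) = f m a)
}.
Set Implicit Arguments.
Arguments tp_i : clear implicits.

Definition tlift (TP : tensor_power) (k : nat) (W : lmodType R)
    (f : M -> ('I_k -> A) -> W) : tp_T TP k -> W :=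
  epsilon (inhabits (fun _ => 0))
    (fun g : tp_T TP k -> W => linear g /\ (forall m a, g (tp_i TP k m a) = f m a)).

(* factor of a tensor by (0-based) A-index, 0 outside range *)
Definition getA (k : nat) (a : 'I_k -> A) (i : nat) : A :=
  if @insub nat (fun x => (x < k)%N) 'I_k i is Some j then a j else 0.

(* Merging the factors at component positions s and t (position 0 is the M
   factor, position p >= 1 is the A-factor a_(p-1)): the product
   a_s * a_t goes to position min(s,t), position max(s,t) is removed. *)
Definition merge_m (B : bimodule) (k : nat) (s t : nat) (m : M) (a : 'I_k -> A) : M :=
  if s == 0%N then ract B m (getA a t.-1)
  else if t == 0%N then lact B (getA a s.-1) m
  else m.

Definition merge_a (k k' : nat) (s t : nat) (a : 'I_k -> A) : 'I_k' -> A :=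
  fun j =>
    let q := j.+1 in
    if q == minn s t then getA a s.-1 * getA a t.-1
    else getA a (if (q < maxn s t)%N then q else q.+1).-1.

Variable N : nat.
Local Notation edge := ('I_N * 'I_N)%type.

(* F_{A,M}(H < H') for H' = H u {e} *)
Definition Fmap (B : bimodule) (TP : tensor_power) (H H' : {set edge}) (e : edge) :
    tp_T TP (kdeg H) -> tp_T TP (kdeg H') :=
  let s := cidx H e.1 in
  let t := cidx H e.2 in
  @tlift TP (kdeg H) (tp_T TP (kdeg H'))
    (fun m a => tp_i TP (kdeg H') (merge_m B s t m a) (@merge_a (kdeg H) (kdeg H') s t a)).

Definition esign (s t : nat) : R := (-1) ^+ (if (s < t)%N then t.+1 else s).

(* cochains: one component F(H) for each edge set H (only multipaths of the
   relevant degree are used) *)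
Definition cochain (TP : tensor_power) := forall H : {set edge}, tp_T TP (kdeg H).

Definition dmu (E : {set edge}) (B : bimodule) (TP : tensor_power) (n : nat)
    (x : cochain TP) : cochain TP :=
  fun H' =>
    if multipath E H' && (#|H'| == n.+1) then
      \sum_(e in H') esign (cidx (H' :\ e) e.1) (cidx (H' :\ e) e.2)
                       *: @Fmap B TP (H' :\ e) H' e (x (H' :\ e))
    else 0.
End Algebra.
Arguments tensor_power {R} A M.
Arguments tp_T {R A M} t k.
Arguments tp_i {R A M} t k _ _.
Arguments bimodule {R} A M.
Arguments cochain {R A M} N TP.
Arguments dmu {R A M N} E B TP n x _.

(* d o d is a sum, over the multipaths H with n + 2 edges and the ordered pairs
   (f, e) of distinct edges of H, of the composite face maps
   H - {e, f} < H - f < H, and the terms for (f, e) and (e, f) cancel.  Both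
   orders join the same components of H0 = H - {e, f}: as H is a multipath, the
   endpoints of e = (x1, y1) and f = (x2, y2) lie in distinct components of H0,
   except that y1 and x2, or y2 and x1 (never both, since H has no directed
   cycle), may share one.  So the two composites agree on pure tensors, the
   shared component case being associativity of the product and of the
   bimodule actions, while the re-indexing of the components under a merge
   makes the two sign exponents sigma_e differ by one modulo 2. *)

From mathcomp Require Import all_boot all_algebra.
From mathcomp Require Import zify.
From Stdlib Require Import ClassicalEpsilon FunctionalExtensionality.
Set Implicit Arguments. Unset Strict Implicit. Unset Printing Implicit Defensive.
Import GRing.Theory.
Local Open Scope ring_scope.

Ltac lia_ifs := repeat match goal with
  | |- context [if ?c then _ else _] =>
    lazymatch c with context [if _ then _ else _] => fail | _ => idtac end;
    first [ have -> : c = true by lia | have -> : c = false by lia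
          | let E := fresh "E" in case E : c ]
  end.

Section Components.
Variable N : nat.
Local Notation V := 'I_N.
Local Notation edge := (V * V)%type.
Local Notation C H := (connect (urel H)).

Lemma urel_sym (H : {set edge}) : symmetric (urel H).
Proof. by move=> u v; rewrite /urel orbC. Qed.

Lemma uconnect_sym (H : {set edge}) u v : C H u v = C H v u.
Proof. exact: (sym_connect_sym (urel_sym H)). Qed.

Lemma uconnect_subset (H H' : {set edge}) u v : H \subset H' -> C H u v -> C H' u v.
Proof.
move=> /subsetP sHH'; apply: connect_sub => a b; rewrite /urel => /orP[] hab;
  by apply: connect1; rewrite /urel (sHH' _ hab) ?orbT.
Qed.

Definition croot (H : {set edge}) (v : V) : V := [arg min_(u < v | C H v u) (u : nat)].

Lemma croot_connect (H : {set edge}) v : C H v (croot H v).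
Proof. by rewrite /croot; case: arg_minnP; first exact: connect0. Qed.

Lemma croot_min (H : {set edge}) v u : C H v u -> (croot H v <= u)%N.
Proof. by rewrite /croot; case: arg_minnP => [|w _]; [exact: connect0 | apply]. Qed.

Lemma crootP (H : {set edge}) v w :
  C H v w -> (forall u, C H v u -> (w <= u)%N) -> croot H v = w.
Proof.
move=> cvw wmin; apply: val_inj; apply/eqP; rewrite eqn_leq croot_min //=.
exact: wmin (croot_connect H v).
Qed.

Lemma croot_eq (H : {set edge}) u v : C H u v -> croot H u = croot H v.
Proof.
move=> cuv; apply: crootP; first exact: connect_trans cuv (croot_connect H v).
by move=> w cuw; apply: croot_min; rewrite uconnect_sym in cuv; apply: connect_trans cuv cuw.
Qed.

Lemma connect_croot (H : {set edge}) u v : croot H u = croot H v -> C H u v.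
Proof.
move=> ruv; apply: connect_trans (croot_connect H u) _.
by rewrite ruv uconnect_sym; exact: croot_connect.
Qed.

Lemma comp_minE (H : {set edge}) w : comp_min H w = (croot H w == w).
Proof.
apply/forallP/eqP => [wmin|rw u].
  apply: crootP; first exact: connect0.
  by move=> u cwu; move: (wmin u); rewrite cwu.
by apply/implyP => cwu; rewrite -rw; exact: croot_min.
Qed.

Lemma comp_min_croot (H : {set edge}) v : comp_min H (croot H v).
Proof. by rewrite comp_minE -(croot_eq (croot_connect H v)). Qed.

Definition nroots_below (H : {set edge}) (r : nat) : nat :=
  #|[set w : V | comp_min H w & (w < r)%N]|.

Lemma cidxE (H : {set edge}) v : cidx H v = nroots_below H (croot H v).
Proof.
apply: eq_card => w; rewrite !inE; congr andb; apply/forallP/idP => [wmin|wr u].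
  by move: (wmin (croot H v)); rewrite croot_connect.
by apply/implyP => cvu; apply: leq_trans wr (croot_min cvu).
Qed.

Lemma nroots_below_mono (H : {set edge}) : {homo nroots_below H : r1 r2 / (r1 <= r2)%N}.
Proof.
move=> r1 r2 r12; apply: subset_leq_card; apply/subsetP => w.
by rewrite !inE => /andP[-> /= wr1]; exact: leq_trans wr1 r12.
Qed.

Lemma nroots_below_ltE (H : {set edge}) (r1 : V) r2 : comp_min H r1 ->
  (nroots_below H r1 < nroots_below H r2)%N = (r1 < r2)%N.
Proof.
move=> root_r1; apply/idP/idP => [|r12].
  by apply: contraTT; rewrite -!leqNgt; exact: nroots_below_mono.
apply: proper_card; apply/properP; split.
  apply/subsetP => w; rewrite !inE => /andP[-> /= wr1]; exact: ltn_trans wr1 r12.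
by exists r1; rewrite !inE ?root_r1 ?r12 // ltnn andbF.
Qed.

Lemma cidx_ltE (H : {set edge}) u v : (cidx H u < cidx H v)%N = (croot H u < croot H v)%N.
Proof. by rewrite !cidxE nroots_below_ltE // comp_min_croot. Qed.

Lemma cidx_eqE (H : {set edge}) u v : (cidx H u == cidx H v) = C H u v.
Proof.
apply/idP/idP => [/eqP cuv|cuv]; last by rewrite !cidxE (croot_eq cuv).
apply: connect_croot; apply: val_inj; apply/eqP; rewrite eqn_leq.
by rewrite leqNgt -cidx_ltE cuv ltnn leqNgt -cidx_ltE cuv ltnn.
Qed.

Lemma cidx_lt_ncomp (H : {set edge}) v : (cidx H v < ncomp H)%N.
Proof.
rewrite cidxE; apply: proper_card; apply/properP; split.
  by apply/subsetP => w; rewrite !inE => /andP[-> _].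
by exists (croot H v); rewrite !inE ?comp_min_croot // ltnn.
Qed.

Lemma ncomp_gt0 (H : {set edge}) (v : V) : (0 < ncomp H)%N.
Proof. exact: leq_ltn_trans (cidx_lt_ncomp H v). Qed.

Lemma cidx_le_kdeg (H : {set edge}) v : (cidx H v <= kdeg H)%N.
Proof. by have := cidx_lt_ncomp H v; rewrite /kdeg; lia. Qed.

Lemma nroots_belowS (H : {set edge}) r (lt_rN : (r < N)%N) :
  nroots_below H r.+1 = (comp_min H (Ordinal lt_rN) + nroots_below H r)%N.
Proof.
rewrite /nroots_below (cardsD1 (Ordinal lt_rN)) !inE ltnSn andbT; congr (_ + _)%N.
apply: eq_card => w; rewrite !inE ltnS leq_eqVlt -val_eqE /=.
by case: (comp_min H w); rewrite ?andbF //=; case: (ltngtP w r).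
Qed.

Lemma cidx_onto (H : {set edge}) j : (j < ncomp H)%N -> exists v, cidx H v = j.
Proof.
have -> : ncomp H = nroots_below H N by apply: eq_card => w; rewrite !inE ltn_ord andbT.
suff: forall r, (r <= N)%N -> (j < nroots_below H r)%N -> exists v, cidx H v = j by apply.
elim=> [|r IHr] lt_rN.
  rewrite (_ : nroots_below H 0 = 0%N) //; apply/eqP; rewrite cards_eq0.
  by apply/eqP/setP => w; rewrite !inE andbF.
rewrite nroots_belowS; have [lt_j_r _|le_r_j] := ltnP j (nroots_below H r).
  exact: IHr (ltnW lt_rN) lt_j_r.
case root_r: (comp_min H (Ordinal lt_rN)); last by rewrite ltnNge le_r_j.
rewrite add1n ltnS => le_j_r; exists (Ordinal lt_rN).
move: root_r; rewrite comp_minE cidxE => /eqP ->.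
by apply/eqP; rewrite eqn_leq le_j_r le_r_j.
Qed.
End Components.

(* The new index of the component of index c once the components s and t are
   joined: the merged component sits at min s t, and those above max s t move
   down by one. *)
Definition merge_idx (s t c : nat) : nat :=
  if (c == s) || (c == t) then minn s t else if (maxn s t < c)%N then c.-1 else c.

Section AddEdge.
Variable N : nat.
Local Notation V := 'I_N.
Local Notation edge := (V * V)%type.
Local Notation C H := (connect (urel H)).

Lemma urel_setU1 (H : {set edge}) (x y u v : V) :
  urel ((x, y) |: H) u v = [|| urel H u v, (u == x) && (v == y) | (u == y) && (v == x)].
Proof.
rewrite /urel !inE !xpair_eqE.
by do 2!case: (_ \in H); case: (u == x) (v == y) (u == y) (v == x) => [] [] [] [].
Qed.

Lemma uconnect_setU1 (H : {set edge}) (x y u v : V) :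
  C ((x, y) |: H) u v = [|| C H u v, C H u x && C H y v | C H u y && C H x v].
Proof.
have sHH1 : H \subset (x, y) |: H by apply/subsetP => z hz; rewrite !inE hz orbT.
have cxy : C ((x, y) |: H) x y by apply: connect1; rewrite /urel !inE eqxx.
have cyx : C ((x, y) |: H) y x by rewrite uconnect_sym.
apply/idP/idP; last first.
  case/or3P=> [|/andP[cux cyv]|/andP[cuy cxv]]; first exact: uconnect_subset.
    apply: connect_trans (uconnect_subset sHH1 cux) _.
    exact: connect_trans cxy (uconnect_subset sHH1 cyv).
  apply: connect_trans (uconnect_subset sHH1 cuy) _.
  exact: connect_trans cyx (uconnect_subset sHH1 cxv).
move/connectP => [p]; elim: p u => [|w p IHp] u /=; first by move=> _ ->; rewrite connect0.
case/andP; rewrite urel_setU1.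
case/or3P=> [huw|/andP[/eqP-> /eqP->]|/andP[/eqP-> /eqP->]] /IHp {}IHp /IHp.
- have cuw : C H u w by apply: connect1.
  case/or3P=> [cwv|/andP[cwx ->]|/andP[cwy ->]];
    by rewrite ?(connect_trans cuw cwv) ?(connect_trans cuw cwx) ?(connect_trans cuw cwy) ?orbT.
- by case/or3P=> [cyv|/andP[_ cyv]|/andP[_ ->]]; rewrite ?connect0 ?cyv ?orbT.
- by case/or3P=> [cxv|/andP[_ ->]|/andP[_ cxv]]; rewrite ?connect0 ?cxv ?orbT.
Qed.

Variables (H0 : {set edge}) (x y : V).
Hypothesis not_cxy : ~~ C H0 x y.
Local Notation H1 := ((x, y) |: H0).
Local Notation r1 := (croot H0 x).
Local Notation r2 := (croot H0 y).
Local Notation lo := (if (r1 < r2)%N then r1 else r2).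
Local Notation hi := (if (r1 < r2)%N then r2 else r1).

Lemma croot_setU1 v : croot H1 v = if C H0 v x || C H0 v y then lo else croot H0 v.
Proof.
have cx : C H0 x r1 := croot_connect H0 x.
have cy : C H0 y r2 := croot_connect H0 y.
have lo_r1 : (lo <= r1)%N by case: ltnP => // /ltnW.
have lo_r2 : (lo <= r2)%N by case: ltnP => // /ltnW.
case: ifP => cv; apply: crootP => [|u]; rewrite uconnect_setU1.
- case: ifP => _; case/orP: cv => cv.
  + by rewrite (connect_trans cv cx).
  + by rewrite cv cx !orbT.
  + by rewrite cv cy orbT.
  + by rewrite (connect_trans cv cy).
- rewrite ![C H0 v _]uconnect_sym in cv.
  case/or3P=> [cvu|/andP[_ cyu]|/andP[_ cxu]].
  + by case/orP: cv => cv; [apply: leq_trans lo_r1 _ | apply: leq_trans lo_r2 _];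
      apply: croot_min; apply: connect_trans cv cvu.
  + exact: leq_trans lo_r2 (croot_min cyu).
  + exact: leq_trans lo_r1 (croot_min cxu).
- by rewrite croot_connect.
- case/or3P=> [|/andP[cvx _]|/andP[cvy _]]; first exact: croot_min.
    by move: cv; rewrite cvx.
  by move: cv; rewrite cvy orbT.
Qed.

Lemma croot_neq : r1 != r2.
Proof. by apply: contraNneq not_cxy; exact: connect_croot. Qed.

Lemma comp_min_hi : comp_min H0 hi.
Proof. by case: ifP => _; exact: comp_min_croot. Qed.

Lemma comp_min_setU1 w : comp_min H1 w = (w != hi) && comp_min H0 w.
Proof.
have root_lo : croot H0 lo = lo.
  by apply/eqP; rewrite -comp_minE; case: ifP => _; exact: comp_min_croot.
rewrite !comp_minE croot_setU1; case: ifP => cw.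
  have r12 := croot_neq.
  have rw : (croot H0 w == r1) || (croot H0 w == r2).
    by case/orP: cw => /croot_eq ->; rewrite eqxx ?orbT.
  apply/eqP/andP => [lo_w|[w_hi /eqP rw_w]].
    by rewrite -lo_w root_lo; split=> //; case: ltnP r12 => _ //; rewrite eq_sym.
  by move: rw w_hi; rewrite rw_w; case: ltnP => _ /orP[] /eqP ->; rewrite ?eqxx.
apply/idP/andP => [/eqP rw|[] //]; split; last by rewrite rw.
apply: contraFneq cw => ->.
by case: ifP => _; rewrite (uconnect_sym _ _ x) (uconnect_sym _ _ y) !croot_connect ?orbT.
Qed.

Lemma nroots_below_setU1 r : nroots_below H1 r = (nroots_below H0 r - (hi < r))%N.
Proof.
rewrite /nroots_below (cardsD1 hi [set w | comp_min H0 w & (w < r)%N]) !inE comp_min_hi /=.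
by rewrite addKn; apply: eq_card => w; rewrite !inE comp_min_setU1 andbA.
Qed.

Lemma cidx_setU1 v : cidx H1 v = merge_idx (cidx H0 x) (cidx H0 y) (cidx H0 v).
Proof.
have nroots_lo : nroots_below H0 lo = minn (nroots_below H0 r1) (nroots_below H0 r2).
  by case: ltnP => r12; [apply/esym/minn_idPl | apply/esym/minn_idPr];
    apply: nroots_below_mono => //; exact: ltnW.
have nroots_hi : nroots_below H0 hi = maxn (nroots_below H0 r1) (nroots_below H0 r2).
  by case: ltnP => r12; [apply/esym/maxn_idPr | apply/esym/maxn_idPl];
    apply: nroots_below_mono => //; exact: ltnW.
have lo_hi : (lo <= hi)%N by case: ltnP => // /ltnW.
rewrite /merge_idx !cidx_eqE [cidx H1 v]cidxE croot_setU1 !(cidxE H0) -nroots_hi.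
rewrite ![C H0 v _]uconnect_sym; case: ifP => cv; rewrite nroots_below_setU1.
  by rewrite -nroots_lo [(hi < lo)%N]ltnNge lo_hi subn0.
by rewrite (nroots_below_ltE _ comp_min_hi); case: (hi < _)%N; rewrite ?subn1 ?subn0.
Qed.

Lemma ncomp_setU1 : ncomp H0 = (ncomp H1).+1.
Proof.
rewrite /ncomp (cardsD1 hi) !inE comp_min_hi add1n; congr _.+1.
by apply: eq_card => w; rewrite !inE comp_min_setU1.
Qed.

Lemma kdeg_setU1 : kdeg H0 = (kdeg H1).+1.
Proof. by rewrite /kdeg ncomp_setU1; have := ncomp_gt0 H1 x; lia. Qed.
End AddEdge.

Section Multipaths.
Variable N : nat.
Local Notation V := 'I_N.
Local Notation edge := (V * V)%type.
Local Notation C H := (connect (urel H)).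
Local Notation D H := (connect (drel H)).

Lemma dconnect_first (H : {set edge}) u w :
  D H u w -> u != w -> exists2 z, (u, z) \in H & D H z w.
Proof.
move/connectP => [[|z p] /= + ->]; first by rewrite eqxx.
by case/andP => huz pz _; exists z => //; apply/connectP; exists p.
Qed.

Lemma dconnect_last (H : {set edge}) u w :
  D H u w -> u != w -> exists2 z, D H u z & (z, w) \in H.
Proof.
move/connectP => [p + ->]; case/lastP: p => [|p z] /=; first by rewrite eqxx.
rewrite rcons_path last_rcons => /andP[pu hz] _.
by exists (last u p) => //; apply/connectP; exists p.
Qed.

Lemma dconnect_subset (H H' : {set edge}) u v : H \subset H' -> D H u v -> D H' u v.
Proof. by move=> /subsetP sHH'; apply: connect_sub => a b hab; apply/connect1/sHH'. Qed.

Section DegreeAtMostOne.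
Variable H : {set edge}.
Hypothesis out_uniq : forall v a b, (v, a) \in H -> (v, b) \in H -> a = b.
Hypothesis in_uniq : forall v a b, (a, v) \in H -> (b, v) \in H -> a = b.

Lemma uconnect_dconnect u v : C H u v -> D H u v || D H v u.
Proof.
move/connectP => [p + ->]; elim: p u => [|w p IHp] u /=; first by rewrite connect0.
case/andP => /orP[] huw /IHp; set z := last w p.
- have duw : D H u w by apply: connect1.
  case/orP => [dwz|dzw]; first by rewrite (connect_trans duw dwz).
  have [->|nzw] := eqVneq z w; first by rewrite duw.
  by case: (dconnect_last dzw nzw) => z' dzz' /(in_uniq huw) ->; rewrite dzz' orbT.
- have dwu : D H w u by apply: connect1.
  case/orP => [dwz|dzw]; last by rewrite (connect_trans dzw dwu) orbT.
  have [ewz|nwz] := eqVneq w z; first by rewrite -ewz dwu orbT.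
  by case: (dconnect_first dwz nwz) => z' /(out_uniq huw) -> ->.
Qed.

Lemma dconnect_from_sink u w : (forall z, (u, z) \notin H) -> D H u w -> u = w.
Proof.
move=> sink duw; apply/eqP; apply: contraT => nuw.
by case: (dconnect_first duw nuw) => z; rewrite (negbTE (sink z)).
Qed.

Lemma dconnect_to_source u w : (forall z, (z, w) \notin H) -> D H u w -> u = w.
Proof.
move=> source duw; apply/eqP; apply: contraT => nuw.
by case: (dconnect_last duw nuw) => z _; rewrite (negbTE (source z)).
Qed.
End DegreeAtMostOne.

Section Multipath.
Variables (E H : {set edge}).
Hypothesis mpH : multipath E H.

Lemma multipath_out_uniq v a b : (v, a) \in H -> (v, b) \in H -> a = b.
Proof.
case/and4P: mpH => _ /forallP /(_ v) /card_le1_eqP out_le1 _ _ hva hvb.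
by apply: out_le1; rewrite inE.
Qed.

Lemma multipath_in_uniq v a b : (a, v) \in H -> (b, v) \in H -> a = b.
Proof.
case/and4P: mpH => _ _ /forallP /(_ v) /card_le1_eqP in_le1 _ hav hbv.
by apply: in_le1; rewrite inE.
Qed.

Lemma multipath_acyclic u v : (u, v) \in H -> ~~ D H v u.
Proof. by case/and4P: mpH => _ _ _ /forallP /(_ u) /forallP /(_ v) /implyP. Qed.

Lemma multipath_subset (H' : {set edge}) : H' \subset H -> multipath E H'.
Proof.
move=> /subsetP sH'H; case/and4P: mpH => sHE out_le1 in_le1 _.
apply/and4P; split.
- by apply/subsetP => e /sH'H; apply: (subsetP sHE).
- apply/forallP => v; apply: leq_trans (forallP out_le1 v); apply: subset_leq_card.
  by apply/subsetP => u; rewrite !inE => /sH'H.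
- apply/forallP => v; apply: leq_trans (forallP in_le1 v); apply: subset_leq_card.
  by apply/subsetP => u; rewrite !inE => /sH'H.
- apply/forallP => u; apply/forallP => v; apply/implyP => /sH'H huv.
  by apply: contra (multipath_acyclic huv); apply: dconnect_subset; apply/subsetP.
Qed.

Variable H' : {set edge}.
Hypothesis sH'H : H' \subset H.

Let uconnect_dconnect' u v : C H' u v -> D H' u v || D H' v u.
Proof.
by apply: uconnect_dconnect => v' a b /(subsetP sH'H) + /(subsetP sH'H);
  [exact: multipath_out_uniq | exact: multipath_in_uniq].
Qed.

Section RemovedEdge.
Variables x y : V.
Hypotheses (Hxy : (x, y) \in H) (H'xy : (x, y) \notin H').

Lemma removed_edge_out z : (x, z) \notin H'.
Proof.
by apply: contra H'xy => H'xz; rewrite (multipath_out_uniq Hxy (subsetP sH'H _ H'xz)).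
Qed.

Lemma removed_edge_in z : (z, y) \notin H'.
Proof.
by apply: contra H'xy => H'zy; rewrite (multipath_in_uniq Hxy (subsetP sH'H _ H'zy)).
Qed.

Lemma removed_edge_sep : ~~ C H' x y.
Proof.
apply/negP => /uconnect_dconnect' /orP[dxy|dyx].
  by move: (multipath_acyclic Hxy); rewrite (dconnect_from_sink removed_edge_out dxy) connect0.
by move: (multipath_acyclic Hxy); rewrite (dconnect_subset sH'H dyx).
Qed.
End RemovedEdge.

Section TwoRemovedEdges.
Variables x1 y1 x2 y2 : V.
Hypotheses (Hxy1 : (x1, y1) \in H) (H'xy1 : (x1, y1) \notin H').
Hypotheses (Hxy2 : (x2, y2) \in H) (H'xy2 : (x2, y2) \notin H').
Hypothesis neq12 : (x1, y1) != (x2, y2).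

Lemma removed_edges_sep_src : ~~ C H' x1 x2.
Proof.
apply/negP => /uconnect_dconnect' c12.
have ex : x1 = x2.
  by case/orP: c12 => [/(dconnect_from_sink (removed_edge_out Hxy1 H'xy1))
                      |/(dconnect_from_sink (removed_edge_out Hxy2 H'xy2)) /esym].
by move: Hxy1 neq12; rewrite ex => /(multipath_out_uniq Hxy2) ->; rewrite eqxx.
Qed.

Lemma removed_edges_sep_tgt : ~~ C H' y1 y2.
Proof.
apply/negP => /uconnect_dconnect' c12.
have ey : y1 = y2.
  by case/orP: c12 => [/(dconnect_to_source (removed_edge_in Hxy2 H'xy2))
                      |/(dconnect_to_source (removed_edge_in Hxy1 H'xy1)) /esym].
by move: Hxy1 neq12; rewrite ey => /(multipath_in_uniq Hxy2) ->; rewrite eqxx.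
Qed.

Lemma removed_edges_no_cycle : ~~ (C H' x1 y2 && C H' y1 x2).
Proof.
apply/negP => /andP[/uconnect_dconnect' c12 /uconnect_dconnect' c21].
have dyx2 : D H' y2 x1.
  by case/orP: c12 => // /(dconnect_from_sink (removed_edge_out Hxy1 H'xy1)) ->; exact: connect0.
have dyx1 : D H' y1 x2.
  by case/orP: c21 => // /(dconnect_from_sink (removed_edge_out Hxy2 H'xy2)) ->; exact: connect0.
move: (multipath_acyclic Hxy2); apply/negP/negPn.
apply: connect_trans (dconnect_subset sH'H dyx2) _; apply: connect_trans (connect1 Hxy1) _.
exact: dconnect_subset sH'H dyx1.
Qed.
End TwoRemovedEdges.
End Multipath.
End Multipaths.

Section LinearFun.
Variables (R : comPzRingType) (U V W : lmodType R).

Lemma linear_comp (f : U -> V) (g : V -> W) : linear f -> linear g -> linear (g \o f).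
Proof. by move=> lf lg a u v /=; rewrite lf lg. Qed.

Lemma linear_fun0 (f : U -> V) : linear f -> f 0 = 0.
Proof.
by move=> lf; have := lf (-1) 0 0; rewrite scaler0 addr0 => ->; rewrite scaleN1r addNr.
Qed.

Lemma linear_funD (f : U -> V) : linear f -> {morph f : u v / u + v}.
Proof. by move=> lf u v; have := lf 1 u v; rewrite !scale1r. Qed.

Lemma linear_funZ (f : U -> V) : linear f -> forall a, {morph f : u / a *: u}.
Proof. by move=> lf a u; have := lf a u 0; rewrite !addr0 (linear_fun0 lf) addr0. Qed.

Lemma linear_fun_sum (f : U -> V) (I : Type) (r : seq I) (P : pred I) (F : I -> U) :
  linear f -> f (\sum_(i <- r | P i) F i) = \sum_(i <- r | P i) f (F i).
Proof.
move=> lf; elim/big_rec2: _ => [|i y1 y2 _ <-]; [exact: linear_fun0 | exact: linear_funD].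
Qed.
End LinearFun.

Section Tensor.
Variables (R : comPzRingType) (A : algType R) (M : lmodType R).
Variables (B : bimodule A M) (TP : tensor_power A M).

Lemma multilinear_comp k (W W' : lmodType R) (f : M -> ('I_k -> A) -> W) (h : W -> W') :
  linear h -> multilinear f -> multilinear (fun m a => h (f m a)).
Proof. by move=> lh [lfm lfa]; split=> *; apply: linear_comp. Qed.

Lemma tliftP k (W : lmodType R) (f : M -> ('I_k -> A) -> W) : multilinear f ->
  linear (tlift (TP:=TP) f) /\ forall m a, tlift (TP:=TP) f (tp_i TP k m a) = f m a.
Proof.
move=> mlf; apply: (epsilon_spec _ (fun g => linear g /\ forall m a, g (tp_i TP k m a) = f m a)).
by case: (@tp_univ _ _ _ TP _ _ _ mlf) => g [? _]; exists g.
Qed.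

Lemma tensor_ext k (W : lmodType R) (g1 g2 : tp_T TP k -> W) :
  linear g1 -> linear g2 -> (forall m a, g1 (tp_i TP k m a) = g2 (tp_i TP k m a)) ->
  g1 =1 g2.
Proof.
move=> lg1 lg2 g12 z.
have mlg1 := multilinear_comp lg1 (@tp_multi _ _ _ TP k).
case: (@tp_univ _ _ _ TP _ _ _ mlg1) => g [_ g_uniq].
rewrite -(g_uniq g1 (conj lg1 (fun m a => erefl))).
by rewrite (g_uniq g2 (conj lg2 (fun m a => esym (g12 m a)))).
Qed.

Lemma tp_i_linear_slot k m (b : 'I_k -> A) (j0 : 'I_k) (L : A -> A) : linear L ->
  linear (fun x => tp_i TP k m (fun j => if j == j0 then L x else b j)).
Proof. by move=> lL; apply: (linear_comp lL ((@tp_multi _ _ _ TP k).2 m b j0)). Qed.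

Lemma getA_update k (a : 'I_k -> A) (i : 'I_k) x p :
  getA (fun j => if j == i then x else a j) p = if p == i then x else getA a p.
Proof.
rewrite /getA; case: insubP => [j _ <-|]; first by rewrite (inj_eq val_inj).
by case: eqP => // ->; rewrite ltn_ord.
Qed.

Lemma getA_ord k (a : 'I_k -> A) (j : 'I_k) : getA a j = a j.
Proof. by rewrite /getA valK. Qed.

Lemma getA_out k (a : 'I_k -> A) p : (k <= p)%N -> getA a p = 0.
Proof. by rewrite /getA; case: insubP => // j; rewrite ltnNge => /negbTE ->. Qed.

Section Merge.
Variables (k k' s t : nat).
Hypotheses (kSk' : k = k'.+1) (le_sk : (s <= k)%N) (le_tk : (t <= k)%N) (neq_st : s != t).

Lemma merge_m_update m (a : 'I_k -> A) (i : 'I_k) x :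
  merge_m B s t m (fun j => if j == i then x else a j) =
  if (s == i.+1) && (t == 0%N) then lact B x m
  else if (t == i.+1) && (s == 0%N) then ract B m x
  else merge_m B s t m a.
Proof.
rewrite /merge_m !getA_update.
by lia_ifs; try reflexivity; try (exfalso; lia); repeat f_equal; lia.
Qed.

Lemma merge_a_update (a : 'I_k -> A) (i : 'I_k) x (j : 'I_k') :
  merge_a s t (fun j => if j == i then x else a j) j =
  if j.+1 == merge_idx s t i.+1 then
    (if s == i.+1 then x * getA a t.-1 else if t == i.+1 then getA a s.-1 * x else x)
  else merge_a s t a j.
Proof.
rewrite /merge_a /merge_idx !getA_update; have := ltn_ord j.
by lia_ifs; try reflexivity; try (exfalso; lia); repeat f_equal; lia.
Qed.

Lemma merge_multilinear :
  multilinear (fun m (a : 'I_k -> A) => tp_i TP k' (merge_m B s t m a) (merge_a s t a)).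
Proof.
have tp_i_linear_m b : linear (fun m => tp_i TP k' m b) := (@tp_multi _ _ _ TP k').1 b.
split=> [a|m a i].
  apply: (linear_comp (f := fun m => merge_m B s t m a)) (tp_i_linear_m _).
  rewrite /merge_m; case: (s == 0%N); first exact: ract_linr.
  by case: (t == 0%N); [exact: lact_linr | move=> ? ? ?].
have lt_ik := ltn_ord i.
have [end_slot|inner_slot] :=
  boolP (((s == i.+1) || (t == i.+1)) && ((s == 0%N) || (t == 0%N))).
  have merge_a_const x :
      merge_a s t (fun j => if j == i then x else a j) = merge_a s t a :> ('I_k' -> A).
    apply: functional_extensionality => j.
    rewrite merge_a_update.
    by have -> : (j.+1 == merge_idx s t i.+1) = false by rewrite /merge_idx; lia_ifs; lia.
  move=> c u v; rewrite !merge_m_update !merge_a_const.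
  case: ifP => [_|/negbT not_src].
    exact: (linear_comp (lact_linl B m) (tp_i_linear_m _)).
  case: ifP => [_|/negbT not_tgt].
    exact: (linear_comp (ract_linl B m) (tp_i_linear_m _)).
  by exfalso; lia.
have lt_j0 : ((merge_idx s t i.+1).-1 < k')%N by rewrite /merge_idx; lia_ifs; lia.
pose j0 := Ordinal lt_j0.
pose L x := if s == i.+1 then x * getA a t.-1 else if t == i.+1 then getA a s.-1 * x else x.
have lL : linear L.
  rewrite /L; case: (s == i.+1); first by move=> c u v; rewrite mulrDl scalerAl.
  by case: (t == i.+1) => c u v //; rewrite mulrDr scalerAr.
have merge_m_const x :
    merge_m B s t m (fun j => if j == i then x else a j) = merge_m B s t m a.
  by rewrite merge_m_update; lia_ifs.
have merge_a_slot x : merge_a s t (fun j => if j == i then x else a j) =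
    (fun j => if j == j0 then L x else merge_a s t a j) :> ('I_k' -> A).
  apply: functional_extensionality => j; rewrite merge_a_update -val_eqE /=.
  by have -> : (j.+1 == merge_idx s t i.+1) = (j == (merge_idx s t i.+1).-1 :> nat)
    by rewrite /merge_idx; lia_ifs; lia.
by move=> c u v; rewrite !merge_m_const !merge_a_slot; exact: tp_i_linear_slot.
Qed.
End Merge.
End Tensor.

Section MergeIndex.
Variables s t : nat.
Hypothesis neq_st : s != t.

Lemma merge_idx_eq c d :
  (merge_idx s t c == merge_idx s t d) = (c == d) || ((c \in [:: s; t]) && (d \in [:: s; t])).
Proof. by rewrite !inE /merge_idx; lia_ifs; lia. Qed.

Lemma merge_idx_eq0 c :
  (merge_idx s t c == 0%N) = (c == 0%N) || ((c \in [:: s; t]) && (0%N \in [:: s; t])).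
Proof. by rewrite !inE /merge_idx; lia_ifs; lia. Qed.
End MergeIndex.

Definition sigma_e (s t : nat) : nat := if (s < t)%N then t.+1 else s.

Lemma esignE (R : comPzRingType) s t : esign R s t = (-1) ^+ sigma_e s t.
Proof. by []. Qed.

Section MergeFactors.
Variables (R : comPzRingType) (A : algType R) (M : lmodType R) (B : bimodule A M).
Implicit Types (g : nat -> A) (m : M).

(* Component position p > 0 carries the A-factor a_(p-1) and position 0 the
   M-factor; getA reads 0 out of range. *)
Definition posA k (a : 'I_k -> A) : nat -> A := fun p => getA a p.-1.

Lemma posAS k (a : 'I_k -> A) p : posA a p.+1 = getA a p.
Proof. by []. Qed.

Definition merge_posA s t g : nat -> A :=
  fun q => if q == minn s t then g s * g t else g (if (q < maxn s t)%N then q else q.+1).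

Definition merge_posM s t m g : M :=
  if s == 0%N then ract B m (g t) else if t == 0%N then lact B (g s) m else m.

Definition merged_factor s t g c : A := if c \in [:: s; t] then g s * g t else g c.

Lemma merge_mE k s t m (a : 'I_k -> A) : merge_m B s t m a = merge_posM s t m (posA a).
Proof. by []. Qed.

Lemma posA_merge_a k k' s t (a : 'I_k -> A) q :
  k = k'.+1 -> (s <= k)%N -> (t <= k)%N -> s != t -> (0 < q)%N ->
  posA (merge_a s t a : 'I_k' -> A) q = merge_posA s t (posA a) q.
Proof.
move=> kSk' le_sk le_tk neq_st q_gt0; rewrite /posA {1}/getA; case: insubP => [j _ /= jq|].
  by have -> : q = j.+1 by lia.
rewrite -ltnS prednK // -kSk' => not_lt_qk; rewrite /merge_posA /posA.
have -> : (q == minn s t) = false by lia.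
by rewrite getA_out //; case: ifP; lia.
Qed.

Lemma merge_posA_ext s t g g' q :
  (forall p, (0 < p)%N -> g p = g' p) -> s != t -> (0 < q)%N ->
  merge_posA s t g q = merge_posA s t g' q.
Proof.
move=> gg' neq_st q_gt0; rewrite /merge_posA.
by case: ifP => [/eqP ?|_]; rewrite !gg' //; [lia | lia | case: ifP; lia].
Qed.

Lemma merge_posM_ext s t m g g' :
  (forall p, (0 < p)%N -> g p = g' p) -> s != t -> merge_posM s t m g = merge_posM s t m g'.
Proof.
move=> gg' neq_st; rewrite /merge_posM.
by case: eqP => [?|_]; [|case: eqP => [?|_] //]; rewrite gg' //; lia.
Qed.

Lemma merge_posA_idx s t g c :
  s != t -> merge_posA s t g (merge_idx s t c) = merged_factor s t g c.
Proof.
move=> neq_st; rewrite /merge_posA /merge_idx /merged_factor !inE.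
by lia_ifs; try reflexivity; try (exfalso; lia); congr (g _); lia.
Qed.

Section MergeTwice.
Variables (k k' k'' s t s1 t1 : nat).
Hypotheses (kSk' : k = k'.+1) (le_sk : (s <= k)%N) (le_tk : (t <= k)%N) (neq_st : s != t).
Hypothesis neq_st1 : s1 != t1.

Lemma merge_m_twice m (a : 'I_k -> A) :
  merge_m B s1 t1 (merge_m B s t m a) (merge_a s t a : 'I_k' -> A) =
  merge_posM s1 t1 (merge_posM s t m (posA a)) (merge_posA s t (posA a)).
Proof. by rewrite !merge_mE; apply: merge_posM_ext => // p p_gt0; exact: posA_merge_a. Qed.

Lemma posA_merge_a_twice (a : 'I_k -> A) q :
  k' = k''.+1 -> (s1 <= k')%N -> (t1 <= k')%N -> (0 < q)%N ->
  posA (merge_a s1 t1 (merge_a s t a : 'I_k' -> A) : 'I_k'' -> A) q =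
  merge_posA s1 t1 (merge_posA s t (posA a)) q.
Proof.
move=> k'Sk'' le_s1k' le_t1k' q_gt0; rewrite posA_merge_a //.
by apply: merge_posA_ext => // p p_gt0; exact: posA_merge_a.
Qed.
End MergeTwice.

Section TwoMerges.
Variables s t s' t' : nat.
Hypotheses (neq_st : s != t) (neq_s't' : s' != t') (neq_ss' : s != s') (neq_tt' : t != t').
Hypothesis no_cycle : ~~ ((s == t') && (t == s')).
Local Notation s1 := (merge_idx s t s').
Local Notation t1 := (merge_idx s t t').
Local Notation s1' := (merge_idx s' t' s).
Local Notation t1' := (merge_idx s' t' t).

Lemma merge_idx_neq : s1 != t1 /\ s1' != t1'.
Proof. by rewrite !merge_idx_eq // !inE; split; lia. Qed.

Lemma merged_factor_comm g c :
  (if merge_idx s t c \in [:: s1; t1]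
   then merged_factor s t g s' * merged_factor s t g t' else merged_factor s t g c) =
  (if merge_idx s' t' c \in [:: s1'; t1']
   then merged_factor s' t' g s * merged_factor s' t' g t else merged_factor s' t' g c).
Proof.
rewrite !inE !merge_idx_eq // /merged_factor !inE.
by lia_ifs; rewrite ?mulrA; repeat f_equal; lia.
Qed.

Lemma merge_posA_comm g c :
  merge_posA s1 t1 (merge_posA s t g) (merge_idx s1 t1 (merge_idx s t c)) =
  merge_posA s1' t1' (merge_posA s' t' g) (merge_idx s1' t1' (merge_idx s' t' c)).
Proof.
have [neq1 neq1'] := merge_idx_neq.
by rewrite !merge_posA_idx // /merged_factor !merge_posA_idx //; exact: merged_factor_comm.
Qed.

Lemma merge_posM_comm m g :
  merge_posM s1 t1 (merge_posM s t m g) (merge_posA s t g) =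
  merge_posM s1' t1' (merge_posM s' t' m g) (merge_posA s' t' g).
Proof.
rewrite /merge_posM !merge_idx_eq0 // !merge_posA_idx // /merged_factor !inE.
by lia_ifs; rewrite ?ractM ?lactM ?lract; try reflexivity; repeat f_equal; lia.
Qed.

Lemma sigma_e_anticomm :
  odd (sigma_e s t + sigma_e s1 t1) = ~~ odd (sigma_e s' t' + sigma_e s1' t1').
Proof. by rewrite /sigma_e /merge_idx /minn /maxn; lia_ifs; lia. Qed.

Lemma esign_anticomm : esign R s t * esign R s1 t1 = - (esign R s' t' * esign R s1' t1').
Proof. by rewrite !esignE -!exprD -signr_odd sigma_e_anticomm signrN signr_odd. Qed.
End TwoMerges.
End MergeFactors.

Lemma setD1C (T : finType) (S : {set T}) a b : S :\ a :\ b = S :\ b :\ a.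
Proof. by rewrite !setDDl setUC. Qed.

Section FaceMaps.
Variables (R : comPzRingType) (A : algType R) (M : lmodType R).
Variables (B : bimodule A M) (TP : tensor_power A M) (N : nat).
Local Notation V := 'I_N.
Local Notation edge := (V * V)%type.
Local Notation C H := (connect (urel H)).
Local Notation Fm H H' e := (@Fmap _ _ _ _ B TP H H' e).

Lemma FmapP (H H' : {set edge}) x y : ~~ C H x y -> H' = (x, y) |: H ->
  linear (Fm H H' (x, y)) /\
  forall m a, Fm H H' (x, y) (tp_i TP _ m a) =
    tp_i TP _ (merge_m B (cidx H x) (cidx H y) m a) (merge_a (cidx H x) (cidx H y) a).
Proof.
move=> not_cxy ->; apply: tliftP; apply: merge_multilinear; rewrite ?cidx_le_kdeg ?cidx_eqE //.
exact: kdeg_setU1.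
Qed.

Section TwoEdges.
Variables (E H : {set edge}) (x1 y1 x2 y2 : V).
Hypotheses (mpH : multipath E H) (Hxy1 : (x1, y1) \in H) (Hxy2 : (x2, y2) \in H).
Hypothesis neq12 : (x1, y1) != (x2, y2).
Local Notation e := (x1, y1).
Local Notation f := (x2, y2).
Local Notation He := (H :\ e).
Local Notation Hf := (H :\ f).
Local Notation H0 := (H :\ f :\ e).

Let H0_sub : H0 \subset H.
Proof. by apply/subsetP => w; rewrite !inE => /and3P[]. Qed.
Let H0e : e \notin H0. Proof. by rewrite !inE eqxx. Qed.
Let H0f : f \notin H0. Proof. by rewrite !inE eqxx andbF. Qed.
Let sep0e := removed_edge_sep mpH H0_sub Hxy1 H0e.
Let sep0f := removed_edge_sep mpH H0_sub Hxy2 H0f.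
Let sepe := removed_edge_sep mpH (subD1set H e) Hxy1 (negbT (setD11 e H)).
Let sepf := removed_edge_sep mpH (subD1set H f) Hxy2 (negbT (setD11 f H)).

Let Hf_setU1 : Hf = e |: H0.
Proof. by rewrite setD1K // !inE neq12 Hxy1. Qed.
Let He_setU1 : He = f |: H0.
Proof. by rewrite setD1C setD1K // !inE eq_sym neq12 Hxy2. Qed.

Let cidx_Hf v : cidx Hf v = merge_idx (cidx H0 x1) (cidx H0 y1) (cidx H0 v).
Proof. by rewrite [in LHS]Hf_setU1 (cidx_setU1 sep0e). Qed.
Let cidx_He v : cidx He v = merge_idx (cidx H0 x2) (cidx H0 y2) (cidx H0 v).
Proof. by rewrite [in LHS]He_setU1 (cidx_setU1 sep0f). Qed.
Let cidx_H_f v : cidx H v = merge_idx (cidx Hf x2) (cidx Hf y2) (cidx Hf v).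
Proof. by rewrite -{1}(setD1K Hxy2) (cidx_setU1 sepf). Qed.
Let cidx_H_e v : cidx H v = merge_idx (cidx He x1) (cidx He y1) (cidx He v).
Proof. by rewrite -{1}(setD1K Hxy1) (cidx_setU1 sepe). Qed.

Local Notation s := (cidx H0 x1).
Local Notation t := (cidx H0 y1).
Local Notation s' := (cidx H0 x2).
Local Notation t' := (cidx H0 y2).

Let neq_st : s != t. Proof. by rewrite cidx_eqE. Qed.
Let neq_s't' : s' != t'. Proof. by rewrite cidx_eqE. Qed.
Let neq_ss' : s != s'.
Proof. by rewrite cidx_eqE (removed_edges_sep_src mpH H0_sub Hxy1 H0e Hxy2 H0f neq12). Qed.
Let neq_tt' : t != t'.
Proof. by rewrite cidx_eqE (removed_edges_sep_tgt mpH H0_sub Hxy1 H0e Hxy2 H0f neq12). Qed.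
Let no_cycle : ~~ ((s == t') && (t == s')).
Proof. by rewrite !cidx_eqE (removed_edges_no_cycle mpH H0_sub Hxy1 H0e Hxy2 H0f). Qed.

Let kdeg0e : kdeg H0 = (kdeg Hf).+1.
Proof. by rewrite [in RHS]Hf_setU1; exact: kdeg_setU1 sep0e. Qed.
Let kdeg0f : kdeg H0 = (kdeg He).+1.
Proof. by rewrite [in RHS]He_setU1; exact: kdeg_setU1 sep0f. Qed.
Let kdegf : kdeg Hf = (kdeg H).+1.
Proof. by rewrite -[in RHS](setD1K Hxy2); exact: kdeg_setU1 sepf. Qed.
Let kdege : kdeg He = (kdeg H).+1.
Proof. by rewrite -[in RHS](setD1K Hxy1); exact: kdeg_setU1 sepe. Qed.
Let neq_f : cidx Hf x2 != cidx Hf y2. Proof. by rewrite cidx_eqE. Qed.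
Let neq_e : cidx He x1 != cidx He y1. Proof. by rewrite cidx_eqE. Qed.

Lemma esign_two_edges :
  esign R (cidx Hf x2) (cidx Hf y2) * esign R s t =
  - (esign R (cidx He x1) (cidx He y1) * esign R s' t').
Proof. by rewrite !cidx_Hf !cidx_He mulrC [_ * esign R s' t']mulrC esign_anticomm. Qed.

Let FmapP0e := FmapP sep0e Hf_setU1.
Let FmapP0f := FmapP sep0f He_setU1.
Let FmapPf := FmapP sepf (esym (setD1K Hxy2)).
Let FmapPe := FmapP sepe (esym (setD1K Hxy1)).

Lemma Fmap_two_edges_comm z :
  Fm Hf H f (Fm H0 Hf e z) = Fm He H e (Fm H0 He f z).
Proof.
have [[lin0e Fm0e] [lin0f Fm0f]] := (FmapP0e, FmapP0f).
have [[linf Fmf] [line Fme]] := (FmapPf, FmapPe).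
apply: (tensor_ext (linear_comp lin0e linf) (linear_comp lin0f line)) => m a /=.
rewrite Fm0e Fm0f Fmf Fme; congr (tp_i _ _ _ _).
  rewrite (merge_m_twice B kdeg0e (cidx_le_kdeg _ _) (cidx_le_kdeg _ _) neq_st neq_f).
  rewrite (merge_m_twice B kdeg0f (cidx_le_kdeg _ _) (cidx_le_kdeg _ _) neq_s't' neq_e).
  by rewrite !cidx_Hf !cidx_He merge_posM_comm.
apply: functional_extensionality => j; rewrite -[LHS]getA_ord -[RHS]getA_ord -!posAS.
rewrite (posA_merge_a_twice kdeg0e _ _ neq_st neq_f _ kdegf) ?cidx_le_kdeg //.
rewrite (posA_merge_a_twice kdeg0f _ _ neq_s't' neq_e _ kdege) ?cidx_le_kdeg //.
have [v <-] : exists v, cidx H v = j.+1.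
  by apply: cidx_onto; have := ltn_ord j; have := ncomp_gt0 H x1; rewrite /kdeg; lia.
by rewrite [in LHS]cidx_H_f [in RHS]cidx_H_e !cidx_Hf !cidx_He merge_posA_comm.
Qed.

Lemma Fmap_two_edges_anticomm z :
  esign R (cidx Hf x2) (cidx Hf y2) *: Fm Hf H f (esign R s t *: Fm H0 Hf e z) =
  - (esign R (cidx He x1) (cidx He y1) *: Fm He H e (esign R s' t' *: Fm H0 He f z)).
Proof.
rewrite (linear_funZ FmapPf.1) (linear_funZ FmapPe.1) !scalerA esign_two_edges.
by rewrite scaleNr Fmap_two_edges_comm.
Qed.
End TwoEdges.

Lemma Fmap_face_linear (E H : {set edge}) f :
  multipath E H -> f \in H -> linear (Fm (H :\ f) H f).
Proof.
case: f => x y mpH Hxy.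
have sep := removed_edge_sep mpH (subD1set H _) Hxy (negbT (setD11 _ H)).
exact: (FmapP sep (esym (setD1K Hxy))).1.
Qed.

Lemma dmuE (E H : {set edge}) n (x : cochain N TP) : multipath E H -> #|H| = n.+1 ->
  dmu E B TP n x H =
  \sum_(e in H) esign R (cidx (H :\ e) e.1) (cidx (H :\ e) e.2) *: Fm (H :\ e) H e (x (H :\ e)).
Proof. by move=> mpH cardH; rewrite /dmu mpH cardH eqxx. Qed.
End FaceMaps.

Lemma sumr_pairs_antisym (T : finType) (V : zmodType) (S : {set T}) (F : T -> T -> V) :
  {in S &, forall i j, i != j -> F i j = - F j i} ->
  \sum_(i in S) \sum_(j in S :\ i) F i j = 0.
Proof.
(* 2 need not be invertible, so the two halves are matched through enum_rank. *)
move=> Fanti; pose G i j := if [&& i \in S, j \in S & i != j] then F i j else 0.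
have -> : \sum_(i in S) \sum_(j in S :\ i) F i j = \sum_i \sum_j G i j.
  rewrite big_mkcond; apply: eq_bigr => i _; rewrite big_mkcond /=; case: ifP => Si.
    by apply: eq_bigr => j _; rewrite /G !inE Si eq_sym; case: (j \in S); case: (i != j).
  by rewrite big1 // => j _; rewrite /G Si.
have Ganti i j : G i j = - G j i.
  rewrite /G; have [->|nij] := eqVneq i j; first by rewrite !andbF oppr0.
  rewrite /= !andbT andbC.
  by case: (boolP (i \in S)) => Si; case: (boolP (j \in S)) => Sj /=; rewrite ?oppr0 ?(Fanti i j).
pose r := @enum_rank T.
have Gsplit i j :
    G i j = (if (r i < r j)%N then G i j else 0) + (if (r j < r i)%N then G i j else 0).
  have [->|nij] := eqVneq i j; first by rewrite /G eqxx !andbF ltnn addr0.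
  have : (r i : nat) != r j by rewrite (inj_eq val_inj) (inj_eq (@enum_rank_inj T)).
  by case: ltngtP => //; rewrite ?addr0 ?add0r.
under eq_bigr do under eq_bigr do rewrite Gsplit.
under eq_bigr do rewrite big_split /=.
rewrite big_split /= [X in _ + X]exchange_big -big_split /=; apply: big1 => i _.
rewrite -big_split /=; apply: big1 => j _.
by case: ifP => _; rewrite ?(Ganti j i) ?addrN ?addr0.
Qed.

Theorem theorem4p10 (N : nat) (E : {set 'I_N * 'I_N}) (HG : is_digraph E)
    (R : comPzRingType) (A : algType R) (M : lmodType R)
    (B : bimodule A M) (TP : tensor_power A M)
    (n : nat) (x : cochain N TP) (H : {set 'I_N * 'I_N}) :
  dmu E B TP n.+1 (dmu E B TP n x) H = 0.
Proof.
rewrite {1}/dmu; case: ifP => [/andP[mpH /eqP cardH]|_] //.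
have card_face f : f \in H -> #|H :\ f| = n.+1.
  by move=> Hf; move: cardH; rewrite (cardsD1 f) Hf add1n => -[].
under eq_bigr => f Hf do
  rewrite (dmuE B x (multipath_subset mpH (subD1set H f)) (card_face f Hf))
          (linear_fun_sum _ _ _ (Fmap_face_linear B (TP:=TP) mpH Hf)) scaler_sumr.
apply: sumr_pairs_antisym => -[x2 y2] -[x1 y1] Hf He nfe /=.
by rewrite [H :\ (x1, y1) :\ _]setD1C (Fmap_two_edges_anticomm B mpH He Hf) // eq_sym.
Qed.
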